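(* Let $p$ be a prime, and let $e\ge 1$ and $k\ge 1$ be integers. Put $r=\gcd(k,e+1)$. Then $$\sigma_k(p^e)\equiv r\,\frac{p^{e+1}-1}{p^{r}-1}\pmod{\sigma(p^e)}.$$ Moreover, $\sigma(p^e)$ divides $\sigma_k(p^e)$ if and only if $r=1$.
   Context: For integers $k\ge 0$ and $n\ge 1$, $\sigma_k(n)=\sum_{d\mid n} d^k$, and $\sigma=\sigma_1$ is the sum-of-divisors function. *)

From mathcomp Require Import all_boot.
Set Implicit Arguments. Unset Strict Implicit. Unset Printing Implicit Defensive.

Definition sigmak (k n : nat) : nat := \sum_(d <- divisors n) d ^ k.
Definition sigma (n : nat) : nat := sigmak 1 n.

From mathcomp Require Import all_boot zify.
Set Implicit Arguments. Unset Strict Implicit. Unset Printing Implicit Defensive.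

(* Put n = e + 1 = r m and k = r k' with coprime k' m. As sigma (p ^ e) divides
   p ^ n - 1, exponents of p may be reduced mod n, and the residues i k mod n
   (i < n) run r times through r * {0, ..., m - 1}; hence
   sigma_k (p ^ e) = r T with T = 1 + p ^ r + ... + p ^ (r (m - 1)).
   Finally sigma (p ^ e) = T (1 + p + ... + p ^ (r - 1)), so sigma (p ^ e)
   divides r T iff 1 + p + ... + p ^ (r - 1) divides r, i.e. iff r = 1. *)

Lemma sigmak_pfactor p e k : prime p ->
  sigmak k (p ^ e) = \sum_(i < e.+1) p ^ (i * k).
Proof.
move=> p_pr; have p_gt1 := prime_gt1 p_pr.
rewrite /sigmak (perm_big [seq p ^ i | i <- iota 0 e.+1]).
  rewrite big_map -(big_mkord xpredT (fun i => p ^ (i * k))) /index_iota subn0.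
  by apply: eq_bigr => i _; rewrite expnM.
apply: uniq_perm; first exact: divisors_uniq.
  by rewrite map_inj_uniq ?iota_uniq //; apply: expnI.
move=> d; rewrite -dvdn_divisors ?expn_gt0 ?prime_gt0 //.
apply/dvdn_pfactor/mapP => // -[m].
  by move=> le_m_e ->; exists m; rewrite // mem_iota add0n ltnS le_m_e.
by rewrite mem_iota add0n ltnS => /andP[_ le_m_e] ->; exists m.
Qed.

Lemma sigma_pfactor p e : prime p -> sigma (p ^ e) = \sum_(i < e.+1) p ^ i.
Proof. by move=> p_pr; rewrite /sigma sigmak_pfactor //; under eq_bigr do rewrite muln1. Qed.

Lemma sum_expn_ge x m : 0 < x -> m <= \sum_(i < m) x ^ i.
Proof.
move=> x_gt0; rewrite -[X in X <= _]card_ord -sum1_card.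
by apply: leq_sum => i _; rewrite expn_gt0 x_gt0.
Qed.

Lemma sum_expn_gt x m : 1 < x -> 1 < m -> m < \sum_(i < m) x ^ i.
Proof.
move=> x_gt1; case: m => [|[|m]] // _; rewrite big_ord_recr /=.
have := sum_expn_ge m.+1 (ltnW x_gt1); have := ltn_expl m.+1 x_gt1.
set s := \sum_(i < m.+1) _; lia.
Qed.

Lemma dvdn_sum_expn x m : 1 < x -> 0 < m ->
  (\sum_(i < m) x ^ i %| m) = (m == 1).
Proof.
move=> x_gt1; case: m => [|[|m]] // _; first by rewrite big_ord1.
apply/negbTE; rewrite gtnNdvd //; exact: sum_expn_gt.
Qed.

Lemma divn_predn_expn x m : 1 < x -> (x ^ m - 1) %/ (x - 1) = \sum_(i < m) x ^ i.
Proof. by move=> x_gt1; rewrite !subn1 predn_exp mulKn // -subn1 subn_gt0. Qed.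

Lemma sum_expn_blocks x r m :
  \sum_(i < m * r) x ^ i = (\sum_(j < m) (x ^ r) ^ j) * \sum_(i < r) x ^ i.
Proof.
elim: m => [|m IH]; first by rewrite !big_ord0.
rewrite mulSnr big_split_ord IH big_ord_recr /= mulnDl -expnM; congr (_ + _).
by rewrite big_distrr; apply: eq_bigr => i _; rewrite expnD (mulnC m).
Qed.

Lemma sum_periodic (F : nat -> nat) m a : (forall i, F (i + m) = F i) ->
  \sum_(i < a * m) F i = a * \sum_(i < m) F i.
Proof.
move=> F_per; have F_shift b i : F (b * m + i) = F i.
  elim: b => [|b IH]; first by rewrite mul0n.
  by rewrite mulSnr -addnA (addnC m) addnA F_per.
elim: a => [|a IH]; first by rewrite !mul0n big_ord0.
rewrite mulSnr big_split_ord IH mulSnr /=; congr (_ + _).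
by apply: eq_bigr => i _; rewrite F_shift.
Qed.

Lemma expn_modn_period x n d a : x ^ n = 1 %[mod d] -> x ^ a = x ^ (a %% n) %[mod d].
Proof.
move=> xn1; rewrite {1}(divn_eq a n) expnD (mulnC _ n) expnM -modnMml -modnXm xn1.
by rewrite modnXm exp1n modnMml mul1n.
Qed.

Lemma reindex_mulmod_coprime (F : nat -> nat) k m : coprime k m ->
  \sum_(i < m) F ((i * k) %% m) = \sum_(i < m) F i.
Proof.
case: m => [|m] co_km; first by rewrite !big_ord0.
pose h (i : 'I_m.+1) : 'I_m.+1 := inord ((i * k) %% m.+1).
have hE i : nat_of_ord (h i) = (i * k) %% m.+1 by rewrite inordK // ltn_mod.
suff h_inj : injective h.
  by rewrite [RHS](reindex_inj h_inj); apply: eq_bigr => i _; rewrite hE.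
have mulk_inj (i j : 'I_m.+1) :
    j <= i -> (i * k) %% m.+1 = (j * k) %% m.+1 -> i = j.
  move=> le_ji /eqP; rewrite eqn_mod_dvd ?leq_mul2r ?le_ji ?orbT //.
  rewrite -mulnBl Gauss_dvdl 1?coprime_sym // /dvdn modn_small.
    by rewrite subn_eq0 => le_ij; apply/val_inj/anti_leq; rewrite le_ij.
  exact: leq_ltn_trans (leq_subr j i) (ltn_ord i).
move=> i j /(congr1 (@nat_of_ord _)); rewrite !hE => ijE.
case: (leqP j i) => [le_ji | /ltnW le_ij]; first exact: mulk_inj.
exact/esym/mulk_inj.
Qed.

Lemma coprime_divn_gcd k n : 0 < gcdn k n ->
  coprime (k %/ gcdn k n) (n %/ gcdn k n).
Proof.
move=> g_gt0; have := muln_gcdl (k %/ gcdn k n) (n %/ gcdn k n) (gcdn k n).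
rewrite !divnK ?dvdn_gcdl ?dvdn_gcdr // => gcdE.
by rewrite /coprime -(eqn_pmul2r g_gt0) gcdE mul1n.
Qed.

Lemma expn_sigma_pfactor_mod p e : prime p -> p ^ e.+1 = 1 %[mod sigma (p ^ e)].
Proof.
move=> p_pr; rewrite -[p ^ e.+1]prednK ?expn_gt0 ?prime_gt0 //.
by rewrite predn_exp -sigma_pfactor // -addn1 modnMDl.
Qed.

Lemma sigmak_pfactor_mod p e k : prime p ->
  let r := gcdn k e.+1 in
  sigmak k (p ^ e) = r * \sum_(j < e.+1 %/ r) (p ^ r) ^ j %[mod sigma (p ^ e)].
Proof.
move=> p_pr r; set n := e.+1; set m := n %/ r; set k' := k %/ r.
have r_gt0 : 0 < r by rewrite gcdn_gt0 orbT.
have n_eq : n = m * r by rewrite divnK ?dvdn_gcdr.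
have k_eq : k = k' * r by rewrite divnK ?dvdn_gcdl.
rewrite sigmak_pfactor // -modn_summ.
under eq_bigr do rewrite (expn_modn_period _ (expn_sigma_pfactor_mod e p_pr)).
rewrite modn_summ; congr (_ %% _).
rewrite -/n k_eq.
under eq_bigr do rewrite mulnA [X in _ %% X]n_eq -muln_modl mulnC expnM.
rewrite n_eq (mulnC m r).
rewrite (sum_periodic (F := fun i => (p ^ r) ^ ((i * k') %% m))) => [|i].
  by rewrite reindex_mulmod_coprime // coprime_divn_gcd.
by rewrite mulnDl addnC [m * _]mulnC modnMDl.
Qed.

Theorem mainTheorem4 (p e k : nat) :
  prime p -> 1 <= e -> 1 <= k ->
  let r := gcdn k e.+1 in
  sigmak k (p ^ e) = r * ((p ^ e.+1 - 1) %/ (p ^ r - 1)) %[mod sigma (p ^ e)]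
  /\ (sigma (p ^ e) %| sigmak k (p ^ e) <-> r = 1).
Proof.
move=> p_pr _ _ r; have p_gt1 := prime_gt1 p_pr.
have r_gt0 : 0 < r by rewrite gcdn_gt0 orbT.
set m := e.+1 %/ r; set T := \sum_(j < m) (p ^ r) ^ j.
have n_eq : e.+1 = m * r by rewrite divnK ?dvdn_gcdr.
have m_gt0 : 0 < m by have := ltn0Sn e; rewrite n_eq muln_gt0 => /andP[].
have sigmak_mod : sigmak k (p ^ e) = r * T %[mod sigma (p ^ e)].
  exact: sigmak_pfactor_mod.
have pr_gt1 : 1 < p ^ r by rewrite -(exp1n r) ltn_exp2r.
split; first by rewrite sigmak_mod n_eq (mulnC m) expnM divn_predn_expn.
have T_gt0 : 0 < T := leq_trans m_gt0 (sum_expn_ge m (ltnW pr_gt1)).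
rewrite /dvdn sigmak_mod -/(dvdn _ (r * T)).
rewrite sigma_pfactor // n_eq sum_expn_blocks -/T (mulnC r) dvdn_pmul2l //.
by rewrite dvdn_sum_expn //; split => /eqP.
Qed.
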